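(* Let $X$ be a real Hilbert space and let $U,V$ be closed linear subspaces of $X$ such that $U\cap V=\{0\}$ and $U+V$ is closed. Then the couple $(U,V)$ is stable.
   Context: $P_C$ is the metric projection onto a closed convex nonempty set $C$; $B_X$ the closed unit ball; $\mathrm{dist}(x,S)=\inf_{s\in S}\|x-s\|$. Attouch–Wets convergence: for nonempty closed $C,D$ and $N\in\mathbb N$ let $e_N(C,D)=\sup_{c\in C\cap NB_X}\mathrm{dist}(c,D)$ ($0$ if $C\cap NB_X=\emptyset$), $h_N(C,D)=\max\{e_N(C,D),e_N(D,C)\}$; $C_j\to C$ if $h_N(C_j,C)\to0$ for every $N$. Given sequences $\{A_n\},\{B_n\}$ of closed convex nonempty sets and $a_0\in X$, the perturbed alternating projections sequences are $b_n=P_{B_n}(a_{n-1})$, $a_n=P_{A_n}(b_n)$ ($n\in\mathbb N$). The couple $(U,V)$ is stable if for every choice of sequences $\{A_n\},\{B_n\}$ of closed convex nonempty sets converging in the Attouch–Wets sense to $U$ and $V$ respectively, and every $a_0\in X$, the corresponding perturbed alternating projections sequences $\{a_n\}$ and $\{b_n\}$ converge in norm. *)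

From HB Require Import structures.
From mathcomp Require Import all_boot all_order all_algebra.
From mathcomp Require Import all_classical all_reals all_analysis.
Set Implicit Arguments. Unset Strict Implicit. Unset Printing Implicit Defensive.
Import Order.TTheory GRing.Theory Num.Theory.
Import numFieldNormedType.Exports.
Local Open Scope classical_set_scope.
Local Open Scope ring_scope.

Section Defs.
Context {R : realType} {X : normedModType R}.

(* ip is an inner product on X inducing the norm of X: together with
   completeness of X this makes X a real Hilbert space. *)
Definition is_inner_product (ip : X -> X -> R) : Prop :=
  (forall x y, ip x y = ip y x) /\
  (forall (a : R) (x y z : X), ip (a *: x + y) z = a * ip x z + ip y z) /\
  (forall x, `|x| ^+ 2 = ip x x).

Definition convex_set (C : set X) : Prop :=
  forall x y (t : R), C x -> C y -> 0 <= t -> t <= 1 ->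
    C (t *: x + (1 - t) *: y).

Definition closed_convex_nonempty (C : set X) : Prop :=
  closed C /\ convex_set C /\ C !=set0.

Definition closed_linear_subspace (U : set X) : Prop :=
  closed U /\ U 0 /\ (forall x y, U x -> U y -> U (x + y)) /\
  (forall (a : R) x, U x -> U (a *: x)).

Definition is_metric_proj (C : set X) (x p : X) : Prop :=
  C p /\ forall c, C c -> `|x - p| <= `|x - c|.

Definition dist (x : X) (S : set X) : R := inf [set `|x - s| | s in S].

Definition nball (N : nat) : set X := [set x | `|x| <= N%:R].

Definition excess (N : nat) (C D : set X) : R :=
  if `[< (C `&` nball N) !=set0 >] then
    sup [set dist c D | c in C `&` nball N]
  else 0.

Definition hN (N : nat) (C D : set X) : R :=
  Num.max (excess N C D) (excess N D C).

Definition AW_cvg (Cs : nat -> set X) (C : set X) : Prop :=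
  forall N : nat, (fun j => hN N (Cs j) C) @ \oo --> (0 : R).

(* a, b are perturbed alternating projection sequences for (A_n),(B_n)
   starting from a_0 :  b_n = P_{B_n}(a_{n-1}), a_n = P_{A_n}(b_n), n >= 1.
   (b 0 is an unused dummy value.) *)
Definition perturbed_alt_proj (As Bs : nat -> set X) (a0 : X)
    (a b : nat -> X) : Prop :=
  a 0%N = a0 /\
  (forall n, is_metric_proj (Bs n.+1) (a n) (b n.+1)) /\
  (forall n, is_metric_proj (As n.+1) (b n.+1) (a n.+1)).

Definition stable_couple (U V : set X) : Prop :=
  forall (As Bs : nat -> set X),
    (forall n, closed_convex_nonempty (As n)) ->
    (forall n, closed_convex_nonempty (Bs n)) ->
    AW_cvg As U -> AW_cvg Bs V ->
    forall (a0 : X) (a b : nat -> X),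
      perturbed_alt_proj As Bs a0 a b ->
      cvg (a @ \oo) /\ cvg (b @ \oo).

End Defs.

From Pilot Require Import Defs.
From HB Require Import structures.
From mathcomp Require Import all_boot all_order all_algebra.
From mathcomp Require Import all_classical all_reals all_analysis.
From mathcomp Require Import ring lra.
Import Order.TTheory GRing.Theory Num.Theory.
Import numFieldNormedType.Exports.
Local Open Scope classical_set_scope.
Local Open Scope ring_scope.

(* Since U and V meet only at 0 and U + V is closed, a Baire category (open
   mapping) argument bounds the U-component of u + v: |u| <= K |u + v|.
   Equivalently U and V make a positive angle: <u, v> <= c |u| |v| with c < 1.
   Attouch-Wets convergence makes A_n and B_n uniformly close to U and V on
   bounded sets; together with the variational inequality of metric projections
   this turns one step b = P_B(a), a' = P_A(b) into |b| <= |a| + e and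
   |a'| <= (c + e) |a| + e for large n.  Since c < 1, both sequences converge to
   0, the only common point of U and V. *)

Section InnerProduct.
Context {R : realType} {X : normedModType R} {ip : X -> X -> R}.
Hypothesis ip_inner : is_inner_product ip.

Lemma ipC x y : ip x y = ip y x.
Proof. by case: ip_inner. Qed.

Lemma ipxx x : ip x x = `|x| ^+ 2.
Proof. by case: ip_inner => _ [] _ ->. Qed.

Lemma ipDl x y z : ip (x + y) z = ip x z + ip y z.
Proof. by case: ip_inner => _ [/(_ 1 x y z) + _]; rewrite scale1r mul1r. Qed.

Lemma ip0l z : ip 0 z = 0.
Proof. by have := ipDl 0 0 z; rewrite addr0; lra. Qed.

Lemma ipZl a x z : ip (a *: x) z = a * ip x z.
Proof. by case: ip_inner => _ [/(_ a x 0 z) + _]; rewrite !addr0 ip0l addr0. Qed.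

Lemma ipNl x z : ip (- x) z = - ip x z.
Proof. by rewrite -scaleN1r ipZl mulN1r. Qed.

Lemma ipBl x y z : ip (x - y) z = ip x z - ip y z.
Proof. by rewrite ipDl ipNl. Qed.

Lemma ipDr x y z : ip z (x + y) = ip z x + ip z y.
Proof. by rewrite ipC ipDl !(ipC z). Qed.

Lemma ipZr a x z : ip z (a *: x) = a * ip z x.
Proof. by rewrite ipC ipZl ipC. Qed.

Lemma ipBr x y z : ip z (x - y) = ip z x - ip z y.
Proof. by rewrite !(ipC z) ipBl. Qed.

Lemma normD2 x y : `|x + y| ^+ 2 = `|x| ^+ 2 + 2 * ip x y + `|y| ^+ 2.
Proof. by rewrite -!ipxx ipDl !ipDr (ipC y x); ring. Qed.

Lemma normB2 x y : `|x - y| ^+ 2 = `|x| ^+ 2 - 2 * ip x y + `|y| ^+ 2.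
Proof. by rewrite normD2 normrN -scaleN1r ipZr; ring. Qed.

Lemma parallelogram (x y : X) : `|x + y| ^+ 2 + `|x - y| ^+ 2 = 2 * `|x| ^+ 2 + 2 * `|y| ^+ 2.
Proof. by rewrite normD2 normB2; ring. Qed.

Lemma ip_le_normM x y : ip x y <= `|x| * `|y|.
Proof.
have [->|x0] := eqVneq x 0; first by rewrite ip0l normr0 mul0r.
have [->|y0] := eqVneq y 0; first by rewrite ipC ip0l normr0 mulr0.
have xy0 : 0 < `|x| * `|y| by rewrite mulr_gt0 ?normr_gt0.
have := sqr_ge0 `| `|y| *: x - `|x| *: y|.
rewrite normB2 ipZl ipZr !normrZ !normr_id !exprMn => h.
by rewrite -(ler_pM2l xy0); nra.
Qed.

Lemma norm_ip_le x y : `|ip x y| <= `|x| * `|y|.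
Proof.
rewrite ler_norml ip_le_normM andbT.
by have := ip_le_normM x (- y); rewrite -scaleN1r ipZr normrZ normrN1; lra.
Qed.

Lemma norm_le_subr_orth {z t : X} : ip z t = 0 -> `|t| <= `|t - z|.
Proof.
move=> zt; rewrite -(ler_pXn2r (_ : 0 < 2)%N) ?nnegrE // normB2 ipC zt.
by have := sqr_ge0 `|z|; lra.
Qed.

End InnerProduct.

Section LinearSubspace.
Context {R : realType} {X : normedModType R} {W : set X}.
Hypothesis W_sub : closed_linear_subspace W.

Lemma subspace0 : W 0.
Proof. by case: W_sub => _ []. Qed.

Lemma subspaceD {x y : X} : W x -> W y -> W (x + y).
Proof. by case: W_sub => _ [_ [WD _]]; apply: WD. Qed.

Lemma subspaceZ a {x : X} : W x -> W (a *: x).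
Proof. by case: W_sub => _ [_ [_ WZ]]; apply: WZ. Qed.

Lemma subspaceB {x y : X} : W x -> W y -> W (x - y).
Proof. by move=> Wx Wy; rewrite -scaleN1r; apply/subspaceD/subspaceZ. Qed.

(* Unqualified, [convex_set] would be MathComp-Analysis' notion. *)
Lemma subspace_convex : Defs.convex_set W.
Proof. by move=> x y t Wx Wy _ _; apply/subspaceD; apply: subspaceZ. Qed.

Lemma subspace_closed_convex_nonempty : closed_convex_nonempty W.
Proof.
by split; [case: W_sub | split; [exact: subspace_convex | exists 0; exact: subspace0]].
Qed.

Lemma subspace_series (u : nat -> X) : (forall j, W (u j)) -> forall n, W (series u n).
Proof.
move=> Wu; elim=> [|n IH]; first by rewrite seriesEord /= big_ord0; exact: subspace0.
by rewrite seriesSr; apply: subspaceD.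
Qed.

End LinearSubspace.

Lemma subspace_sum {R : realType} {X : normedModType R} {U V : set X} :
  closed_linear_subspace U -> closed_linear_subspace V ->
  closed [set u + v | u in U & v in V] ->
  closed_linear_subspace [set u + v | u in U & v in V].
Proof.
move=> HU HV Wcl; split=> //; split.
  by exists 0; [exact: subspace0 | exists 0; [exact: subspace0 | rewrite addr0]].
split.
  move=> _ _ [u1 Uu1 [v1 Vv1 <-]] [u2 Uu2 [v2 Vv2 <-]].
  exists (u1 + u2); first exact: subspaceD.
  by exists (v1 + v2); [exact: subspaceD | rewrite addrACA].
move=> a _ [u Uu [v Vv <-]].
exists (a *: u); first exact: subspaceZ.
by exists (a *: v); [exact: subspaceZ | rewrite scalerDr].
Qed.

Section MetricProjection.
Context {R : realType} {X : normedModType R} {ip : X -> X -> R}.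
Hypothesis ip_inner : is_inner_product ip.

Lemma metric_proj_ip_le0 {C : set X} {x p c : X} :
  Defs.convex_set C -> is_metric_proj C x p -> C c -> ip (x - p) (c - p) <= 0.
Proof.
move=> Cconv [Cp p_min] Cc.
set a := ip (x - p) (c - p); set m := `|c - p| ^+ 2.
have key t : 0 < t -> t < 1 -> 2 * a <= t * m.
  move=> t0 t1.
  have Cpt : C (p + t *: (c - p)).
    have -> : p + t *: (c - p) = t *: c + (1 - t) *: p.
      by rewrite scalerBr scalerBl scale1r addrCA.
    exact: Cconv Cc Cp (ltW t0) (ltW t1).
  have := p_min _ Cpt; rewrite -(ler_pXn2r (_ : 0 < 2)%N) ?nnegrE //.
  rewrite opprD addrA [X in _ <= X](normB2 ip_inner) (ipZr ip_inner).
  rewrite normrZ gtr0_norm // exprMn -/a -/m => h.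
  by rewrite -(ler_pM2l t0); nra.
rewrite leNgt; apply/negP => a0.
have m0 : 0 <= m by rewrite exprn_ge0.
have ma : 0 < m + 2 * a by lra.
have t1 : a / (m + 2 * a) < 1 by rewrite ltr_pdivrMr // mul1r; lra.
have := key _ (divr_gt0 a0 ma) t1.
rewrite mulrAC ler_pdivlMr //; nra.
Qed.

Lemma metric_proj_sq_le {C : set X} {x p c : X} :
  Defs.convex_set C -> is_metric_proj C x p -> C c ->
  `|p| ^+ 2 <= ip x p + (`|x| + `|p|) * `|c|.
Proof.
move=> Cconv Hp Cc; have := metric_proj_ip_le0 Cconv Hp Cc.
rewrite (ipBl ip_inner) !(ipBr ip_inner) (ipxx ip_inner).
have := norm_ip_le ip_inner x c; have := norm_ip_le ip_inner p c.
rewrite !ler_norml => /andP[_ ?] /andP[? _]; lra.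
Qed.

Lemma metric_proj_subspace_orth {W : set X} {x p : X} : closed_linear_subspace W ->
  is_metric_proj W x p -> forall w, W w -> ip (x - p) w = 0.
Proof.
move=> HW Hp w Ww; have Wp := Hp.1.
have := metric_proj_ip_le0 (subspace_convex HW) Hp (subspaceD HW Wp Ww).
have := metric_proj_ip_le0 (subspace_convex HW) Hp (subspaceB HW Wp Ww).
by rewrite addrAC subrr add0r (addrC p w) addrK -(scaleN1r w) (ipZr ip_inner); lra.
Qed.

End MetricProjection.

Section Distance.
Context {R : realType} {X : normedModType R}.

Lemma dist_ge0 (x : X) (S : set X) : S !=set0 -> 0 <= dist x S.
Proof.
move=> [s Ss]; apply: lb_le_inf; first by exists `|x - s|, s.
by move=> _ [y _ <-].
Qed.

Lemma dist_le {x s : X} {S : set X} : S s -> dist x S <= `|x - s|.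
Proof. by move=> Ss; apply: ge_inf; [exists 0 => _ [y _ <-] | exists s]. Qed.

Lemma dist_lt {x : X} {S : set X} {e : R} : S !=set0 -> dist x S < e ->
  exists2 s, S s & `|x - s| < e.
Proof.
move=> [s Ss] /inf_lt[]; first by exists `|x - s|, s.
by move=> _ [s' Ss' <-] ?; exists s'.
Qed.

End Distance.

Section HilbertProjection.
Context {R : realType} {X : completeNormedModType R} {ip : X -> X -> R}.
Hypothesis ip_inner : is_inner_product ip.

Lemma convex_sub_sq_le {C : set X} (x : X) {y z : X} : Defs.convex_set C -> C y -> C z ->
  `|y - z| ^+ 2 <=
    2 * (`|x - y| ^+ 2 - dist x C ^+ 2) + 2 * (`|x - z| ^+ 2 - dist x C ^+ 2).
Proof.
move=> Cconv Cy Cz.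
have Cmid : C (2^-1 *: y + (1 - 2^-1) *: z) by apply: Cconv => //; lra.
have d0 := dist_ge0 x C (ex_intro _ y Cy).
have dmid := dist_le (x := x) Cmid.
have := parallelogram ip_inner (x - y) (x - z).
have -> : x - y + (x - z) = 2 *: (x - (2^-1 *: y + (1 - 2^-1) *: z)).
  rewrite scalerBr scalerDr !scalerA mulrBr mulr1 mulfV ?pnatr_eq0 // scale1r.
  by rewrite (_ : 2 - 1 = 1 :> R) ?scale1r; [rewrite scaler_nat mulr2n opprD addrACA | lra].
have -> : x - y - (x - z) = - (y - z) by rewrite opprB addrC addrA subrK opprB.
rewrite normrN normrZ ger0_norm // exprMn.
have : dist x C ^+ 2 <= `|x - (2^-1 *: y + (1 - 2^-1) *: z)| ^+ 2.
  by rewrite ler_pXn2r ?nnegrE.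
lra.
Qed.

Lemma minimizing_seq_cvg {C : set X} {x : X} {w : nat -> X} : Defs.convex_set C ->
  (forall n, C (w n)) -> (forall n, `|x - w n| <= dist x C + n.+1%:R^-1) ->
  cvg (w @ \oo).
Proof.
move=> Cconv Cw w_min; set d := dist x C.
have d0 : 0 <= d by apply: dist_ge0; exists (w 0%N).
have excess_sq n : `|x - w n| ^+ 2 - d ^+ 2 <= (2 * d + 1) * n.+1%:R^-1.
  have q0 : 0 < n.+1%:R^-1 :> R by rewrite invr_gt0.
  have q1 : n.+1%:R^-1 <= 1 :> R by rewrite invf_le1 // ler1n.
  have a0 := normr_ge0 (x - w n); have := w_min n.
  move: (n.+1%:R^-1) q0 q1 => q q0 q1 h.
  have : `|x - w n| ^+ 2 <= (d + q) ^+ 2 by rewrite ler_pXn2r // nnegrE; lra.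
  nra.
apply/cauchy_cvgP/cauchy_exP => e e0.
have eta0 : 0 < e ^+ 2 / (4 * (2 * d + 1)) by rewrite divr_gt0 ?exprn_gt0 //; lra.
have [N _ HN] := near_infty_natSinv_lt (PosNum eta0).
exists (w N), N => // n /= Nn; rewrite -ball_normE /ball_ /=.
rewrite -(ltr_pXn2r (_ : 0 < 2)%N) ?nnegrE ?(ltW e0) //.
apply: le_lt_trans (convex_sub_sq_le x Cconv (Cw N) (Cw n)) _; rewrite -/d.
have le_N : (2 * d + 1) / n.+1%:R <= (2 * d + 1) / N.+1%:R.
  by rewrite ler_wpM2l ?lef_pV2 ?posrE ?ler_nat //; lra.
have := HN N (leqnn N); rewrite /= ltr_pdivlMr; last lra.
have := excess_sq N; have := excess_sq n; move: le_N.
move: (N.+1%:R^-1) (n.+1%:R^-1) => qN qn; nra.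
Qed.

Lemma metric_proj_exists {C : set X} (x : X) : closed_convex_nonempty C ->
  exists p, is_metric_proj C x p.
Proof.
move=> [Ccl [Cconv C0]]; set d := dist x C.
have near_min n : exists w, C w /\ `|x - w| <= d + n.+1%:R^-1.
  have [w Cw /ltW ?] : exists2 w, C w & `|x - w| < d + n.+1%:R^-1.
    by apply: dist_lt C0 _; rewrite ltrDl invr_gt0.
  by exists w.
have [w Hw] := choice near_min.
have w_cvg := minimizing_seq_cvg Cconv (fun n => (Hw n).1) (fun n => (Hw n).2).
set p := lim (w @ \oo).
have Cp : C p by apply: closed_cvg Ccl _ _ w_cvg; apply: nearW => n; case: (Hw n).
exists p; split => // c Cc; apply: le_trans (dist_le Cc).
apply/ler_addgt0Pr => e e0.
have e2 : 0 < e / 2 by rewrite divr_gt0.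
have [n [/= inv_lt wp_lt]] := filter_ex (filterI
  (near_infty_natSinv_lt (PosNum e2)) (cvgr_dist_lt _ _ w_cvg _ e2)).
have := ler_distD (w n) x p; have := (Hw n).2; rewrite (distrC (w n)) -/d.
by move: inv_lt; move: (n.+1%:R^-1) => q; lra.
Qed.

Lemma subspace_orth_decomp {W : set X} (x : X) : closed_linear_subspace W ->
  exists2 p, W p & forall w, W w -> ip (x - p) w = 0.
Proof.
move=> HW; have [p Hp] := metric_proj_exists x (subspace_closed_convex_nonempty HW).
by exists p; [exact: Hp.1 | exact: (metric_proj_subspace_orth ip_inner HW Hp)].
Qed.

End HilbertProjection.

Lemma Baire_ball_closure {R : realType} {X : completeNormedModType R} {S : nat -> set X} :
  (forall x, exists k, S k x) ->
  exists k x0 r, 0 < r /\ forall y, `|x0 - y| < r -> closure (S k) y.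
Proof.
move=> cover; pose O k := ~` closure (S k).
have [k O_nondense] : exists k, ~ dense (O k).
  apply/existsNP => O_dense.
  have O_open_dense k : open (O k) /\ dense (O k).
    by split; [exact/closed_openC/closed_closure | exact: O_dense].
  have [a [_ Ha]] := Baire O_open_dense (ex_intro _ 0 I : setT !=set0) openT.
  have [k Ska] := cover a.
  exact: Ha k I (subset_closure Ska).
have [D [[x0 D_x0] DO]] := denseNE O_nondense.
have /nbhs_ballP[r r0 Dr] := open_nbhs_nbhs D_x0.
exists k, x0, r; split => // y xy; have Dy : D y by apply: Dr; rewrite -ball_normE.
by apply: contrapT => Oy; have : (D `&` O k) y by []; rewrite DO.
Qed.

Lemma series_geometric_lim {R : realType} {X : completeNormedModType R}
    {u : nat -> X} {B : R} : 0 <= B -> (forall j, `|u j| <= B * 2^-1 ^+ j) ->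
  exists2 l, series u @ \oo --> l & `|l| <= 2 * B.
Proof.
move=> B0 u_le.
have half_lt1 : `|2^-1 : R| < 1 by rewrite gtr0_norm ?invf_lt1 ?ltr1n.
have u_cvg : cvgn (series u).
  apply: normed_cvg; apply: (series_le_cvg (v_ := geometric B 2^-1)).
  - by move=> n /=.
  - by move=> n /=; rewrite mulr_ge0 ?exprn_ge0.
  - exact: u_le.
  - exact: is_cvg_geometric_series.
exists (limn (series u)) => //.
rewrite -lim_norm //; apply: limr_le; first exact: is_cvg_norm.
apply: nearW => n; have -> : 2 * B = B / (1 - 2^-1) by field; lra.
apply: le_trans (geometric_le_lim n B0 _ half_lt1); last by rewrite invr_gt0.
rewrite !seriesEord /=; apply: le_trans (ler_norm_sum _ _ _) _.
exact: ler_sum.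
Qed.

Lemma residual_series_lim {R : realType} {X : normedModType R} {s d : nat -> X} {l : X} :
  (forall n, s n.+1 = s n - d n) -> s @ \oo --> 0 -> series d @ \oo --> l ->
  s 0%N = l.
Proof.
move=> s_step s_lim d_lim.
have s_eq : s = (fun n => s 0%N - series d n).
  apply: funext; elim=> [|n IH]; first by rewrite seriesEord /= big_ord0 subr0.
  by rewrite s_step {1}IH seriesSr opprD addrA.
apply/eqP; rewrite -subr_eq0; apply/eqP.
have s_lim' : (fun n => s 0%N - series d n) @ \oo --> 0 by rewrite -s_eq.
exact: cvg_unique _ (cvgB (cvg_cst _) d_lim) s_lim'.
Qed.

Section SumOfSubspaces.
Context {R : realType} {X : completeNormedModType R} {ip : X -> X -> R}.
Hypothesis ip_inner : is_inner_product ip.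
Context {U V : set X}.
Hypotheses (HU : closed_linear_subspace U) (HV : closed_linear_subspace V).
Hypothesis sum_closed : closed [set u + v | u in U & v in V].
Local Notation W := [set u + v | u in U & v in V].

Let HW : closed_linear_subspace W := subspace_sum HU HV sum_closed.

Lemma sum_orth_decomp x : exists u v z,
  [/\ U u, V v, forall w, W w -> ip z w = 0 & x = u + v + z].
Proof.
have [_ [u Uu [v Vv <-]] orth] := subspace_orth_decomp ip_inner x HW.
by exists u, v, (x - (u + v)); split => //; rewrite addrC subrK.
Qed.

Lemma sum_approx_bounded : exists2 K, 0 < K & exists2 r, 0 < r &
  forall w, W w -> `|w| < r -> forall e, 0 < e ->
    exists u v, [/\ U u, V v, `|u| <= K, `|v| <= K & `|w - (u + v)| < e].
Proof.
(* By the projection theorem the sets S k cover X, so by Baire one of them is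
   dense in a ball; differences of its points then approximate small w. *)
pose S (k : nat) x := exists u v z, [/\ U u /\ V v, `|u| <= k%:R /\ `|v| <= k%:R,
  forall w, W w -> ip z w = 0 & x = u + v + z].
have cover x : exists k, S k x.
  have [u [v [z [Uu Vv orth ->]]]] := sum_orth_decomp x.
  exists (Num.truncn (`|u| + `|v|)).+1, u, v, z; split => //.
  by have := truncnS_gt (`|u| + `|v|); have := normr_ge0 u; have := normr_ge0 v; split; lra.
have [k [x0 [r [r0 ball_Sk]]]] := Baire_ball_closure cover.
exists (2 * k%:R + 1); first by rewrite ltr_wpDl ?mulr_ge0.
exists r => // w Ww wr e e0.
have e2 : 0 < e / 2 by rewrite divr_gt0.
have near_Sk y : `|x0 - y| < r -> exists y', S k y' /\ `|y - y'| < e / 2.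
  move=> /ball_Sk /(_ _ (nbhsx_ballx y _ e2))[y' [Sy' yy']].
  by exists y'; split => //; move: yy'; rewrite -ball_normE.
have x0w_r : `|x0 - (x0 + w)| < r by rewrite opprD addrA subrr add0r normrN.
have x0_r : `|x0 - x0| < r by rewrite subrr normr0.
have [_ [[u1 [v1 [z1 [[Uu1 Vv1] [nu1 nv1] orth1 ->]]]] d1]] := near_Sk _ x0w_r.
have [_ [[u0 [v0 [z0 [[Uu0 Vv0] [nu0 nv0] orth0 ->]]]] d0]] := near_Sk _ x0_r.
exists (u1 - u0), (v1 - v0); split; [exact: subspaceB | exact: subspaceB | | | ].
- by apply: le_trans (ler_normB _ _) _; lra.
- by apply: le_trans (ler_normB _ _) _; lra.
set t := w - (u1 - u0 + (v1 - v0)).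
have Wt : W t.
  apply: (subspaceB HW Ww).
  by exists (u1 - u0); [exact: subspaceB | exists (v1 - v0); [exact: subspaceB |]].
have tz : ip (z1 - z0) t = 0 by rewrite (ipBl ip_inner) orth1 // orth0 // subrr.
(* z1 - z0 is orthogonal to U + V, so dropping it cannot increase the error. *)
apply: le_lt_trans (norm_le_subr_orth ip_inner tz) _.
have -> : t - (z1 - z0) = w - (u1 + v1 + z1 - (u0 + v0 + z0)).
  rewrite /t -addrA -opprD; congr (_ - _).
  by symmetry; rewrite opprD addrACA opprD [X in X + _]addrACA.
have -> : forall y1 y0, w - (y1 - y0) = (x0 + w - y1) - (x0 - y0).
  move=> y1 y0; rewrite -[x0 + w - y1]addrA (addrC x0) addrKA opprK.
  by rewrite opprB addrA addrAC.
by apply: le_lt_trans (ler_normB _ _) _; lra.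
Qed.

Lemma sum_approx_half : exists2 M, 0 < M & forall w, W w ->
  exists u v, [/\ U u, V v, `|u| <= M * `|w|, `|v| <= M * `|w|
    & `|w - (u + v)| <= `|w| / 2].
Proof.
have [K K0 [r r0 approx]] := sum_approx_bounded.
exists (2 * K / r); first by rewrite !divr_gt0 ?mulr_gt0.
move=> w Ww; have [->|w0] := eqVneq w 0.
  by exists 0, 0; rewrite addr0 subr0 !normr0 !mulr0 mul0r; split => //; apply: subspace0.
have nw : 0 < `|w| by rewrite normr_gt0.
pose lam := r / (2 * `|w|).
have lam0 : 0 < lam by rewrite divr_gt0 ?mulr_gt0.
have lamw : `|lam *: w| = r / 2 by rewrite normrZ gtr0_norm // /lam; field; lra.
have [||u [v [Uu Vv nu nv uv]]] := approx (lam *: w) (subspaceZ HW lam Ww) _ (r / 4).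
- by rewrite lamw; lra.
- by rewrite divr_gt0.
have ilam : lam^-1 = 2 * `|w| / r by rewrite invf_div.
have ilam0 : 0 < lam^-1 by rewrite invr_gt0.
exists (lam^-1 *: u), (lam^-1 *: v); split; [exact: subspaceZ | exact: subspaceZ | | | ].
- rewrite normrZ gtr0_norm // (le_trans (ler_wpM2l (ltW ilam0) nu)) //.
  by rewrite ilam (_ : 2 * `|w| / r * K = 2 * K / r * `|w|) //; ring.
- rewrite normrZ gtr0_norm // (le_trans (ler_wpM2l (ltW ilam0) nv)) //.
  by rewrite ilam (_ : 2 * `|w| / r * K = 2 * K / r * `|w|) //; ring.
have -> : w - (lam^-1 *: u + lam^-1 *: v) = lam^-1 *: (lam *: w - (u + v)).
  by rewrite scalerBr scalerA mulVf ?gt_eqF // scale1r scalerDr.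
rewrite normrZ gtr0_norm // (le_trans (ler_wpM2l (ltW ilam0) (ltW uv))) //.
by rewrite ilam (_ : 2 * `|w| / r * (r / 4) = `|w| / 2) //; field; lra.
Qed.

Lemma sum_decomp_bounded : exists2 M, 0 < M & forall w, W w ->
  exists u v, [/\ U u, V v, w = u + v & `|u| <= M * `|w|].
Proof.
have [M M0 step] := sum_approx_half.
have /choice[f f_step] : forall w, exists uv : X * X, W w ->
    [/\ U uv.1, V uv.2, `|uv.1| <= M * `|w|, `|uv.2| <= M * `|w|
      & `|w - (uv.1 + uv.2)| <= `|w| / 2].
  move=> w; have [Ww|nWw] := pselect (W w); last by exists (0, 0); move/nWw.
  by have [u [v ?]] := step w Ww; exists (u, v).
exists (2 * M); first by rewrite mulr_gt0.
(* Correct the residual repeatedly: it halves at each step, and the corrections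
   sum to the decomposition. *)
move=> w Ww; pose ws j := iter j (fun x => x - ((f x).1 + (f x).2)) w.
pose us j := (f (ws j)).1; pose vs j := (f (ws j)).2.
have Wws j : W (ws j).
  elim: j => //= j IH; have [Uu Vv _ _ _] := f_step _ IH.
  by apply: (subspaceB HW IH); exists (f (ws j)).1 => //; exists (f (ws j)).2.
have ws_le j : `|ws j| <= `|w| * 2^-1 ^+ j.
  elim: j => [|j IH]; first by rewrite expr0 mulr1.
  have [_ _ _ _ half] := f_step _ (Wws j).
  rewrite exprS mulrCA; apply: le_trans half _.
  by rewrite mulrC; apply: ler_wpM2l IH.
have us_le j : `|us j| <= M * `|w| * 2^-1 ^+ j.
  by have [_ _ uj _ _] := f_step _ (Wws j); apply: le_trans uj _; rewrite -mulrA ler_pM2l.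
have vs_le j : `|vs j| <= M * `|w| * 2^-1 ^+ j.
  by have [_ _ _ vj _] := f_step _ (Wws j); apply: le_trans vj _; rewrite -mulrA ler_pM2l.
have Mw0 : 0 <= M * `|w| by rewrite mulr_ge0 // ltW.
have half_lt1 : `|2^-1 : R| < 1 by rewrite gtr0_norm ?invf_lt1 ?ltr1n.
have [u u_lim u_le] := series_geometric_lim Mw0 us_le.
have [v v_lim _] := series_geometric_lim Mw0 vs_le.
have Uu : U u.
  apply: closed_cvg HU.1 _ _ u_lim; apply: nearW => n; apply: (subspace_series HU) => j.
  by have [] := f_step _ (Wws j).
have Vv : V v.
  apply: closed_cvg HV.1 _ _ v_lim; apply: nearW => n; apply: (subspace_series HV) => j.
  by have [] := f_step _ (Wws j).
exists u, v; split => //; last by rewrite -mulrA.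
apply: (residual_series_lim (s := ws) (d := us + vs)) => //; last first.
  by rewrite seriesD; exact: cvgD.
apply: norm_cvg0; apply: (squeeze_cvgr _ (cvg_cst 0) (cvg_geometric `|w| half_lt1)).
by apply: nearW => n; rewrite normr_ge0 ws_le.
Qed.

Lemma sum_component_le : U `&` V = [set 0] ->
  exists2 K, 0 < K & forall u v, U u -> V v -> `|u| <= K * `|u + v|.
Proof.
move=> UV0; have [M M0 decomp] := sum_decomp_bounded.
exists M => // u v Uu Vv.
have Wuv : [set u + v | u in U & v in V] (u + v) by exists u => //; exists v.
have [u' [v' [Uu' Vv' uv_eq u'_le]]] := decomp (u + v) Wuv.
suff uu' : u = u' by rewrite {1}uu'.
have : (U `&` V) (u - u').
  split; first exact: subspaceB.
  have -> : u - u' = v' - v by apply/eqP; rewrite subr_eq addrAC (addrC v') -uv_eq addrK.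
  exact: subspaceB.
by rewrite UV0 => /subr0_eq.
Qed.

Lemma sum_cos_lt1 : U `&` V = [set 0] ->
  exists c, [/\ 0 <= c, c < 1 & forall u v, U u -> V v -> ip u v <= c * `|u| * `|v|].
Proof.
move=> UV0; have [K K0 HK] := sum_component_le UV0.
set k := (K + 1) ^+ 2.
have k_ge1 : 1 <= k by rewrite /k; nra.
exists (1 - (2 * k)^-1); split.
- by rewrite subr_ge0 invf_le1; lra.
- by rewrite gtrBl invr_gt0; lra.
move=> u v Uu Vv.
have := mulr_ge0 (normr_ge0 u) (normr_ge0 v); rewrite le_eqVlt => /orP[/eqP ab0|ab_pos].
  by rewrite -mulrA -ab0 mulr0 ab0; apply: ip_le_normM.
(* Compare |v| u and -|u| v, which have the same norm. *)
have e_sq : `| `|v| *: u + - `|u| *: v| ^+ 2 =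
    2 * (`|u| * `|v|) ^+ 2 - 2 * (`|u| * `|v|) * ip u v.
  rewrite (normD2 ip_inner) (ipZl ip_inner) (ipZr ip_inner) !normrZ normrN !normr_id.
  ring.
have lower : `|u| * `|v| <= (K + 1) * `| `|v| *: u + - `|u| *: v|.
  have := HK _ _ (subspaceZ HU `|v| Uu) (subspaceZ HV (- `|u|) Vv).
  rewrite normrZ normr_id mulrC => /le_trans; apply.
  by rewrite ler_wpM2r // lerDl.
have sq_le : (`|u| * `|v|) ^+ 2 <=
    k * (2 * (`|u| * `|v|) ^+ 2 - 2 * (`|u| * `|v|) * ip u v).
  by rewrite /k -e_sq -exprMn ler_pXn2r // nnegrE ?mulr_ge0 //; lra.
clearbody k; have k_pos : 0 < 2 * k by lra.
rewrite -(ler_pM2l k_pos).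
have -> : 2 * k * ((1 - (2 * k)^-1) * `|u| * `|v|) = (2 * k - 1) * (`|u| * `|v|) :> R.
  by field; rewrite gt_eqF //; lra.
by rewrite -(ler_pM2l ab_pos); nra.
Qed.

End SumOfSubspaces.

Section AttouchWets.
Context {R : realType} {X : normedModType R}.

(* Consequences of [hN 1 C L < eta], see [AW_cvg_close]. *)
Definition aw_close (eta : R) (C L : set X) : Prop :=
  (exists2 c, C c & `|c| < eta) /\
  (forall q, C q -> `|q| <= 1 -> exists2 l, L l & `|q - l| < eta).

Lemma dist_le_excess {N : nat} {C D : set X} {c : X} (M : R) :
  (C `&` nball N) c -> (forall c', (C `&` nball N) c' -> dist c' D <= M) ->
  dist c D <= excess N C D.
Proof.
move=> Cc HM; rewrite /excess asboolT; last by exists c.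
by apply: ub_le_sup; [exists M => _ [c' Cc' <-]; exact: HM | exists c].
Qed.

Lemma AW_cvg_close {Cs : nat -> set X} {L : set X} : L 0 -> (forall n, Cs n !=set0) ->
  AW_cvg Cs L -> forall eta, 0 < eta -> \forall n \near \oo, aw_close eta (Cs n) L.
Proof.
move=> L0 Cne AW eta eta0.
apply: filterS (cvgr0_norm_lt _ (AW 1%N) _ eta0) => n /= h.
have CL : excess 1 (Cs n) L < eta.
  by apply: le_lt_trans h; apply: le_trans (ler_norm _); rewrite le_max lexx.
have LC : excess 1 L (Cs n) < eta.
  by apply: le_lt_trans h; apply: le_trans (ler_norm _); rewrite le_max lexx orbT.
split.
  have [a Ca] := Cne n.
  have : dist 0 (Cs n) < eta.
    apply: le_lt_trans LC; apply: (dist_le_excess (1 + `|a|)).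
      by split => //; rewrite /nball /= normr0.
    move=> c' [_ c'1]; apply: le_trans (dist_le Ca) _.
    by apply: le_trans (ler_normB _ _) _; rewrite lerD2r.
  by case/(dist_lt (Cne n)) => c Cc; rewrite sub0r normrN; exists c.
move=> q Cq q1; apply: (dist_lt (ex_intro _ 0 L0)); apply: le_lt_trans CL.
apply: (dist_le_excess 1) => // c' [_ c'1].
by apply: le_trans (dist_le L0) _; rewrite subr0.
Qed.

Lemma aw_close_cone {eta : R} {C L : set X} :
  closed_linear_subspace L -> Defs.convex_set C -> eta <= 2^-1 -> aw_close eta C L ->
  forall q, C q -> exists2 l, L l & `|q - l| <= 4 * eta * (1 + `|q|).
Proof.
move=> HL Cconv eta_le [[c Cc c_lt] near_L] q Cq.
have c0 := normr_ge0 c; have q0 := normr_ge0 q.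
have [q1|q1] := leP `|q| 1.
  by have [l Ll ql] := near_L q Cq q1; exists l => //; nra.
pose t := (2 * `|q|)^-1.
have t0 : 0 < t by rewrite invr_gt0; lra.
have tq : t * `|q| = 2^-1 by rewrite /t invfM -mulrA mulVf ?mulr1 ?gt_eqF //; lra.
have t1 : t <= 1 by rewrite /t invf_le1; lra.
pose qt := t *: q + (1 - t) *: c.
have qt1 : `|qt| <= 1.
  apply: le_trans (ler_normD _ _) _.
  rewrite !normrZ (gtr0_norm t0) (ger0_norm (_ : 0 <= 1 - t)) ?subr_ge0 // tq.
  have : (1 - t) * `|c| <= eta by nra.
  lra.
have [l Ll qtl] := near_L qt (Cconv _ _ _ Cq Cc (ltW t0) t1) qt1.
exists ((2 * `|q|) *: l); first exact: subspaceZ.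
have -> : q - (2 * `|q|) *: l = (2 * `|q|) *: ((qt - l) - (1 - t) *: c).
  rewrite /qt (addrAC (t *: q)) addrK scalerBr scalerA /t mulfV ?scale1r //.
  by rewrite gt_eqF //; lra.
rewrite normrZ ger0_norm; last lra.
have : `|qt - l - (1 - t) *: c| <= 2 * eta.
  apply: le_trans (ler_normB _ _) _.
  rewrite normrZ ger0_norm ?subr_ge0 //; nra.
nra.
Qed.

End AttouchWets.

Section RealBounds.
Context {R : realType}.

Lemma sq_le_affine {B s Y : R} :
  0 <= B -> 0 <= s -> Y ^+ 2 <= B * Y + s ^+ 2 -> Y <= B + s.
Proof.
move=> B0 s0 h; rewrite leNgt; apply/negP => lt.
have : s * s <= s * Y by rewrite ler_wpM2l //; lra.
nra.
Qed.

Lemma alt_proj_real_bound {c eta e P Y E1 E2 : R} :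
  0 <= c -> c <= 1 -> 0 < eta -> eta <= 8^-1 -> 100 * eta <= e -> 208 * eta <= e ^+ 2 ->
  0 <= P -> 0 <= Y -> 0 <= E1 -> E1 <= 4 * eta * (1 + P) ->
  0 <= E2 -> E2 <= 4 * eta * (1 + Y) ->
  Y ^+ 2 <= c * (Y + E2) * (P + E1) + (P + E1) * E2 + E1 * Y + (P + Y) * eta ->
  Y <= c * P + e / 2 * (1 + P).
Proof.
move=> c0 c1 eta0 eta8 eta_e eta_e2 P0 Y0 E10 E1_le E20 E2_le Y_sq.
have c1' : 0 <= 1 - c by lra.
have cY : c * (Y + E2) * (P + E1) <= c * P * Y + E1 * Y + (P + E1) * E2.
  have := mulr_ge0 (mulr_ge0 c1' E10) Y0.
  have := mulr_ge0 (mulr_ge0 c1' (addr_ge0 P0 E10)) E20.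
  nra.
have E1Y : E1 * Y <= 4 * eta * (1 + P) * Y by apply: ler_wpM2r.
have PE1E2 : (P + E1) * E2 <= (3 / 2 * (1 + P)) * (4 * eta * (1 + Y)).
  by apply: ler_pM; [exact: addr_ge0 | exact: E20 | nra | exact: E2_le].
have PYeta : (P + Y) * eta <= eta * (1 + P) * (1 + Y) by have := mulr_ge0 P0 Y0; nra.
(* Collecting the error terms: Y^2 <= (c P + 21 eta (1 + P)) Y + 13 eta (1 + P). *)
have quad : Y ^+ 2 <= (c * P + 21 * eta * (1 + P)) * Y + (e / 4 * (1 + P)) ^+ 2.
  have : 13 * eta * (1 + P) <= (e / 4 * (1 + P)) ^+ 2.
    have : 13 * eta <= (e / 4) ^+ 2 by rewrite expr_div_n; lra.
    move=> h; rewrite exprMn; apply: le_trans _ (ler_wpM2r (sqr_ge0 (1 + P)) h).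
    by have := mulr_ge0 (mulr_ge0 (ltW eta0) P0) (addr_ge0 ler01 P0); nra.
  have := mulr_ge0 (mulr_ge0 (ltW eta0) P0) Y0; nra.
have B0 : 0 <= c * P + 21 * eta * (1 + P) by apply: addr_ge0; [exact: mulr_ge0 | nra].
have s0 : 0 <= e / 4 * (1 + P) by apply: mulr_ge0; lra.
apply: le_trans (sq_le_affine B0 s0 quad) _.
by have := mulr_ge0 (ltW eta0) P0; nra.
Qed.

Lemma affine_iter_le {r : nat -> R} {q e : R} {N : nat} :
  0 <= q -> q < 1 -> 0 <= e -> (forall n, (N <= n)%N -> r n.+1 <= q * r n + e) ->
  forall k, r (N + k)%N <= q ^+ k * r N + e / (1 - q).
Proof.
move=> q0 q1 e0 step; elim=> [|k IH].
  by rewrite addn0 expr0 mul1r lerDl divr_ge0 // subr_ge0 ltW.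
rewrite addnS; apply: le_trans (step _ (leq_addr _ _)) _.
have -> : q ^+ k.+1 * r N + e / (1 - q) = q * (q ^+ k * r N + e / (1 - q)) + e.
  by rewrite exprS; field; rewrite subr_eq0 gt_eqF.
by rewrite lerD2r ler_wpM2l.
Qed.

Lemma affine_contraction_cvg0 {r : nat -> R} {c : R} : 0 <= c -> c < 1 ->
  (forall n, 0 <= r n) ->
  (forall e, 0 < e -> \forall n \near \oo, r n.+1 <= (c + e) * r n + e) ->
  r @ \oo --> 0.
Proof.
move=> c0 c1 r0 step; apply/cvgr0Pnorm_lt => eps eps0.
pose e := Num.min ((1 - c) / 2) (eps * (1 - c) / 4).
have e0 : 0 < e by rewrite lt_min !divr_gt0 ?mulr_gt0 ?subr_gt0.
have e_c : e <= (1 - c) / 2 by rewrite ge_min lexx.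
have e_eps : e <= eps * (1 - c) / 4 by rewrite ge_min lexx orbT.
clearbody e.
have q0 : 0 <= c + e by lra.
have q1 : c + e < 1 by lra.
have tail : e / (1 - (c + e)) <= eps / 2.
  rewrite ler_pdivrMr; last lra.
  by have := mulr_ge0 (ltW eps0) (ltW e0); nra.
have [N _ HN] := step e e0.
have q_norm : `|c + e| < 1 by rewrite ger0_norm.
have eps2 : 0 < eps / 2 by rewrite divr_gt0.
have [K _ HK] := cvgr0_norm_lt _ (cvg_geometric (r N) q_norm) _ eps2.
exists (N + K)%N => // n /= Kn.
have Nn : (N <= n)%N := leq_trans (leq_addr K N) Kn.
rewrite -(subnKC Nn) ger0_norm //.
have := HK (n - N)%N; rewrite /= leq_subRL // ger0_norm ?mulr_ge0 ?exprn_ge0 //.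
move=> /(_ Kn).
have := affine_iter_le q0 q1 (ltW e0) HN (n - N); rewrite mulrC; lra.
Qed.

End RealBounds.

Section AlternatingProjectionStep.
Context {R : realType} {X : normedModType R} {ip : X -> X -> R}.
Hypothesis ip_inner : is_inner_product ip.
Context {U V : set X} {c : R}.
Hypotheses (HU : closed_linear_subspace U) (HV : closed_linear_subspace V).
Hypothesis cos_le : forall u v, U u -> V v -> ip u v <= c * `|u| * `|v|.

Lemma alt_proj_step_le {eta e : R} {A B : set X} {x p y : X} :
  0 <= c -> c <= 1 -> 0 < eta -> eta <= 8^-1 -> 100 * eta <= e -> 208 * eta <= e ^+ 2 ->
  Defs.convex_set A -> Defs.convex_set B -> aw_close eta A U -> aw_close eta B V ->
  is_metric_proj B x p -> is_metric_proj A p y ->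
  `|p| <= `|x| + 2 * eta /\ `|y| <= c * `|p| + e / 2 * (1 + `|p|).
Proof.
move=> c0 c1 eta0 eta8 eta_e eta_e2 Aconv Bconv Aclose Bclose Hp Hy.
have eta2 : eta <= 2^-1 by lra.
have [[a' Aa' a'_lt] _] := Aclose; have [[b' Bb' b'_lt] _] := Bclose.
have [v Vv pv] := aw_close_cone HV Bconv eta2 Bclose _ Hp.1.
have [u Uu yu] := aw_close_cone HU Aconv eta2 Aclose _ Hy.1.
have := metric_proj_sq_le ip_inner Bconv Hp Bb'.
have := metric_proj_sq_le ip_inner Aconv Hy Aa'.
have := ip_le_normM ip_inner x p.
have nx := normr_ge0 x; have np := normr_ge0 p; have ny := normr_ge0 y.
have := ler_wpM2l (addr_ge0 nx np) (ltW b'_lt).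
have := ler_wpM2l (addr_ge0 np ny) (ltW a'_lt).
move=> Ya Pb xp Y_sq P_sq; split; first by nra.
have ip_split : ip p y = ip v u + ip v (y - u) + ip (p - v) y.
  by rewrite -(ipDr ip_inner) (addrC u) subrK -(ipDl ip_inner) (addrC v) subrK.
have nu := normr_ge0 u; have nv := normr_ge0 v.
have v_le : `|v| <= `|p| + `|p - v| by have := ler_normB p (p - v); rewrite subKr.
have u_le : `|u| <= `|y| + `|y - u| by have := ler_normB y (y - u); rewrite subKr.
have J : ip v u <= c * (`|y| + `|y - u|) * (`|p| + `|p - v|).
  rewrite (ipC ip_inner); apply: le_trans (cos_le _ _ Uu Vv) _.
  by rewrite -!mulrA ler_wpM2l // ler_pM.
have K1 : ip v (y - u) <= (`|p| + `|p - v|) * `|y - u|.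
  by apply: le_trans (ip_le_normM ip_inner _ _) _; rewrite ler_wpM2r.
have K2 := ip_le_normM ip_inner (p - v) y.
apply: (alt_proj_real_bound c0 c1 eta0 eta8 eta_e eta_e2 np ny
  (normr_ge0 _) pv (normr_ge0 _) yu).
have := normr_ge0 (y - u); have := normr_ge0 (p - v); nra.
Qed.

Lemma alt_proj_contraction {e : R} : 0 <= c -> c <= 1 -> 0 < e ->
  exists2 eta, 0 < eta &
  forall (A B : set X) (x p y : X), Defs.convex_set A -> Defs.convex_set B ->
    aw_close eta A U -> aw_close eta B V -> is_metric_proj B x p -> is_metric_proj A p y ->
    `|p| <= `|x| + e /\ `|y| <= (c + e) * `|x| + e.
Proof.
move=> c0 c1 e0; pose eta := Num.min 8^-1 (Num.min (e / 100) (e ^+ 2 / 208)).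
have eta0 : 0 < eta.
  by rewrite /eta !lt_min; apply/and3P; split; rewrite ?divr_gt0 ?exprn_gt0.
have eta8 : eta <= 8^-1 by rewrite /eta ge_min lexx.
have eta_e : 100 * eta <= e by rewrite -ler_pdivlMl // /eta !ge_min mulrC lexx orbT.
have eta_e2 : 208 * eta <= e ^+ 2 by rewrite -ler_pdivlMl // /eta !ge_min mulrC lexx !orbT.
exists eta => // A B x p y Aconv Bconv Acl Bcl Hp Hy; clearbody eta.
have [p_le y_le] :=
  alt_proj_step_le c0 c1 eta0 eta8 eta_e eta_e2 Aconv Bconv Acl Bcl Hp Hy.
have nx := normr_ge0 x; have np := normr_ge0 p.
split; first lra.
have ce0 : 0 <= c + e / 2 by lra.
have c1' : 0 <= 1 - c by lra.
have eta8' : 0 <= 8^-1 - eta by lra.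
have := ler_wpM2l ce0 p_le; have := mulr_ge0 (ltW e0) eta8'.
have := mulr_ge0 (ltW e0) nx; have := mulr_ge0 c1' (ltW eta0).
nra.
Qed.

Lemma perturbed_alt_proj_contraction {As Bs : nat -> set X} {a0 : X} {a b : nat -> X} :
  0 <= c -> c <= 1 ->
  (forall n, closed_convex_nonempty (As n)) -> (forall n, closed_convex_nonempty (Bs n)) ->
  AW_cvg As U -> AW_cvg Bs V -> perturbed_alt_proj As Bs a0 a b ->
  forall e, 0 < e -> \forall n \near \oo,
    `|a n.+1| <= (c + e) * `|a n| + e /\ `|b n.+1| <= `|a n| + e.
Proof.
move=> c0 c1 HA HB AWA AWB [_ [Hb Ha]] e e0.
have [eta eta0 step] := alt_proj_contraction c0 c1 e0.
have nonempty (C : set X) : closed_convex_nonempty C -> C !=set0 by case=> _ [].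
have closeA := AW_cvg_close (subspace0 HU) (fun n => nonempty _ (HA n)) AWA _ eta0.
have closeB := AW_cvg_close (subspace0 HV) (fun n => nonempty _ (HB n)) AWB _ eta0.
near=> n.
have [||b_le a_le] := step _ _ _ _ _ (HA n.+1).2.1 (HB n.+1).2.1 _ _ (Hb n) (Ha n).
- by near: n; exact: cvg_addnl 1 _ closeA.
- by near: n; exact: cvg_addnl 1 _ closeB.
by split.
Unshelve. all: by end_near.
Qed.

End AlternatingProjectionStep.

Theorem corollary4p19 (R : realType) (X : completeNormedModType R)
  (ip : X -> X -> R) (Hip : is_inner_product ip) (U V : set X) :
  closed_linear_subspace U -> closed_linear_subspace V ->
  U `&` V = [set 0] ->
  closed [set u + v | u in U & v in V] ->
  stable_couple U V.
Proof.
move=> HU HV UV0 sum_closed As Bs HA HB AWA AWB a0 a b Hab.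
have [c [c0 c1 cos_le]] := sum_cos_lt1 Hip HU HV sum_closed UV0.
have step :=
  perturbed_alt_proj_contraction Hip HU HV cos_le c0 (ltW c1) HA HB AWA AWB Hab.
have a_to0 : a @ \oo --> 0.
  apply: norm_cvg0; apply: (affine_contraction_cvg0 c0 c1) => // e e0.
  by apply: filterS (step e e0) => n [].
have b_to0 : b @ \oo --> 0.
  apply/cvgr0Pnorm_lt => e e0; apply: near_inftyS; near=> n.
  have [_ b_le] :
      `|a n.+1| <= (c + e / 2) * `|a n| + e / 2 /\ `|b n.+1| <= `|a n| + e / 2.
    by near: n; apply: step; rewrite divr_gt0.
  have : `|a n| < e / 2 by near: n; apply: (cvgr0_norm_lt _ a_to0); rewrite divr_gt0.
  lra.
by split; [exact: cvgP 0 a_to0 | exact: cvgP 0 b_to0].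
Unshelve. all: by end_near.
Qed.
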